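(* Let $f\in C^6([-1,1])$ and $M:=\sup\{|f^{(6)}(x)| : x\in[-1,1]\}$. Define \[ T(f):=\tfrac{2}{5}\cdot\tfrac13\bigl(f(-1)+4f(0)+f(1)\bigr)+\tfrac35\Bigl(f\bigl(-\tfrac{\sqrt3}{3}\bigr)+f\bigl(\tfrac{\sqrt3}{3}\bigr)\Bigr),\qquad I(f):=\int_{-1}^1 f(x)\,dx . \] Then $|T(f)-I(f)|\le \dfrac{M}{28350}$. *)

From Stdlib Require Import Reals Lra.
From Coquelicot Require Import Coquelicot.
Open Scope R_scope.

Definition I11 (x : R) : Prop := -1 <= x <= 1.

Definition has_deriv_on_I11 (g g' : R -> R) : Prop :=
  forall x, I11 x -> forall eps, 0 < eps -> exists delta, 0 < delta /\
    forall y, I11 y -> Rabs (y - x) < delta ->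
      Rabs (g y - g x - g' x * (y - x)) <= eps * Rabs (y - x).

Definition continuous_on_I11 (g : R -> R) : Prop :=
  forall x, I11 x -> forall eps, 0 < eps -> exists delta, 0 < delta /\
    forall y, I11 y -> Rabs (y - x) < delta -> Rabs (g y - g x) < eps.

(* D is a witness that f is C^6 on [-1,1]: D 0 = f on [-1,1],
   D (k+1) is the derivative of D k on [-1,1] for k < 6,
   and D 6 (= f^(6)) is continuous on [-1,1]. *)
Definition C6_on_I11 (f : R -> R) (D : nat -> R -> R) : Prop :=
  (forall x, I11 x -> D 0%nat x = f x) /\
  (forall k, (k < 6)%nat -> has_deriv_on_I11 (D k) (D (S k))) /\
  continuous_on_I11 (D 6%nat).

Definition Tq (f : R -> R) : R :=
  (2/5) * ((1/3) * (f (-1) + 4 * f 0 + f 1))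
  + (3/5) * (f (- (sqrt 3 / 3)) + f (sqrt 3 / 3)).

Definition Iq (f : R -> R) : R := RInt f (-1) 1.

From Stdlib Require Import Reals Lra Psatz Lia Factorial.
From Coquelicot Require Import Coquelicot.
Open Scope R_scope.

(* Both the rule T and the integral I are exact on polynomials of degree at most 5,
   so six integrations by parts on each of the intervals cut out by the nodes
   -1, -c, 0, c, 1 (c = sqrt 3 / 3) turn T f - I f into the integral of K f^(6),
   where K is the Peano kernel of T - I, a polynomial on each interval.  K is
   nonnegative, hence |T f - I f| <= M * int K, and int K is the error of the rule
   on x^6/720: 7/16200 - 1/2520 = 1/28350.  Since f is only differentiable within
   [-1,1], the derivatives of f are first extended to R by tangent lines at the
   endpoints, so that the fundamental theorem of calculus applies. *)

Definition clamp (x : R) : R := Rmax (-1) (Rmin 1 x).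

Lemma clamp_I11 x : I11 (clamp x).
Proof. unfold clamp, I11, Rmax, Rmin; repeat destruct Rle_dec; lra. Qed.

Lemma clamp_id x : I11 x -> clamp x = x.
Proof. unfold clamp, I11, Rmax, Rmin; intros; repeat destruct Rle_dec; lra. Qed.

Lemma clamp_lipschitz x y : Rabs (clamp y - clamp x) <= Rabs (y - x).
Proof.
  unfold clamp, Rmax, Rmin; repeat destruct Rle_dec; unfold Rabs;
    repeat destruct Rcase_abs; lra.
Qed.

Lemma clamp_dist x y : I11 x -> Rabs (y - clamp y) <= Rabs (y - x).
Proof.
  unfold clamp, I11, Rmax, Rmin; intros; repeat destruct Rle_dec; unfold Rabs;
    repeat destruct Rcase_abs; lra.
Qed.

Lemma continuous_comp_clamp g x :
  continuous_on_I11 g -> I11 x -> continuous (fun y => g (clamp y)) x.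
Proof.
  intros Hg Hx. apply continuity_pt_filterlim. intros eps Heps.
  destruct (Hg x Hx eps Heps) as [delta [Hdelta Hclose]].
  exists delta; split; [exact Hdelta|]. intros y [_ Hyx]. simpl in *. unfold R_dist in *.
  pose proof (clamp_lipschitz x y) as Hlip. rewrite (clamp_id x Hx) in *.
  apply Hclose; [apply clamp_I11 | lra].
Qed.

Lemma continuous_on_I11_of_deriv g g' : has_deriv_on_I11 g g' -> continuous_on_I11 g.
Proof.
  intros Hd x Hx eps Heps.
  destruct (Hd x Hx 1 Rlt_0_1) as [delta [Hdelta Hclose]].
  set (L := Rabs (g' x) + 1).
  assert (HL : 0 < L) by (unfold L; pose proof (Rabs_pos (g' x)); lra).
  exists (Rmin delta (eps / L)). split.
  { apply Rmin_pos; [lra|]. apply Rdiv_lt_0_compat; lra. }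
  intros y Hy Hyx.
  assert (Hyx1 : Rabs (y - x) < delta) by (eapply Rlt_le_trans; [exact Hyx | apply Rmin_l]).
  assert (Hyx2 : Rabs (y - x) < eps / L) by (eapply Rlt_le_trans; [exact Hyx | apply Rmin_r]).
  assert (HyxL : Rabs (y - x) * L < eps).
  { replace eps with (eps / L * L) by (field; lra). apply Rmult_lt_compat_r; lra. }
  specialize (Hclose y Hy Hyx1).
  pose proof (Rabs_triang (g y - g x - g' x * (y - x)) (g' x * (y - x))) as Htri.
  replace (g y - g x - g' x * (y - x) + g' x * (y - x)) with (g y - g x) in Htri by ring.
  rewrite Rabs_mult in Htri. unfold L in HyxL. lra.
Qed.

Lemma is_derive_eps_delta (F : R -> R) x l :
  (forall eps, 0 < eps -> exists delta, 0 < delta /\ forall y, Rabs (y - x) < delta ->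
     Rabs (F y - F x - l * (y - x)) <= eps * Rabs (y - x)) ->
  is_derive F x l.
Proof.
  intros HF. apply is_derive_Reals. intros eps Heps.
  destruct (HF (eps / 2) ltac:(lra)) as [delta [Hdelta Hclose]].
  exists (mkposreal delta Hdelta). intros h Hh0 Hh. simpl in Hh.
  specialize (Hclose (x + h)). replace (x + h - x) with h in Hclose by ring.
  specialize (Hclose Hh).
  assert (Habs : 0 < Rabs h) by now apply Rabs_pos_lt.
  replace ((F (x + h) - F x) / h - l) with ((F (x + h) - F x - l * h) / h) by now field.
  unfold Rdiv. rewrite Rabs_mult, Rabs_inv.
  apply (Rmult_lt_reg_r (Rabs h)); [exact Habs|].
  rewrite Rmult_assoc, Rinv_l by lra. nra.
Qed.

Definition extend (G g : R -> R) (y : R) : R := G (clamp y) + g (clamp y) * (y - clamp y).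

Lemma extend_I11 G g x : I11 x -> extend G g x = G x.
Proof. intros Hx. unfold extend. rewrite clamp_id by exact Hx. ring. Qed.

Lemma is_derive_extend G g x :
  has_deriv_on_I11 G g -> continuous_on_I11 g -> I11 x -> is_derive (extend G g) x (g x).
Proof.
  intros HG Hg Hx. apply is_derive_eps_delta. intros eps Heps.
  destruct (HG x Hx (eps / 2) ltac:(lra)) as [delta1 [Hdelta1 HG1]].
  destruct (Hg x Hx (eps / 2) ltac:(lra)) as [delta2 [Hdelta2 Hg2]].
  exists (Rmin delta1 delta2). split; [now apply Rmin_pos|]. intros y Hy.
  pose proof (Rmin_l delta1 delta2). pose proof (Rmin_r delta1 delta2).
  set (e := clamp y).
  assert (He : I11 e) by apply clamp_I11.
  assert (Hex : Rabs (e - x) <= Rabs (y - x)).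
  { rewrite <- (clamp_id x Hx) at 1. apply clamp_lipschitz. }
  assert (Hye : Rabs (y - e) <= Rabs (y - x)) by now apply clamp_dist.
  specialize (HG1 e He ltac:(lra)). specialize (Hg2 e He ltac:(lra)).
  assert (Hslope : Rabs ((g e - g x) * (y - e)) <= eps / 2 * Rabs (y - e)).
  { rewrite Rabs_mult. apply Rmult_le_compat_r; [apply Rabs_pos | lra]. }
  rewrite (extend_I11 G g x Hx). unfold extend. fold e.
  replace (G e + g e * (y - e) - G x - g x * (y - x))
    with ((G e - G x - g x * (e - x)) + (g e - g x) * (y - e)) by ring.
  eapply Rle_trans; [apply Rabs_triang | nra].
Qed.

Ltac derive_by_rules leaf :=
  repeat match goal with
  | |- is_derive (fun _ => ?c) _ _ => apply (is_derive_const c)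
  | |- is_derive (fun t => @?f t - @?g t) _ _ =>
      apply (@is_derive_minus R_AbsRing R_NormedModule f g)
  | |- is_derive (fun t => @?f t + @?g t) _ _ =>
      apply (@is_derive_plus R_AbsRing R_NormedModule f g)
  | |- is_derive (fun t => @?f t * @?g t) _ _ =>
      apply (@is_derive_mult R_AbsRing f g); [| | intros; apply Rmult_comm]
  | |- is_derive _ _ _ => solve [leaf]
  end.

Definition kernel_chain (K : nat -> R -> R) : Prop :=
  (forall j t, (j < 5)%nat -> is_derive (K j) t (K (S j) t)) /\
  (forall t, is_derive (K 5%nat) t (-1)).

Definition deriv_chain_on (a b : R) (F : nat -> R -> R) : Prop :=
  (forall k x, (k < 6)%nat -> a <= x <= b -> is_derive (F k) x (F (S k) x)) /\
  (forall x, a <= x <= b -> continuous (F 6%nat) x).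

Definition parts_sum (K F : nat -> R -> R) (t : R) : R :=
  K 0%nat t * F 5%nat t - K 1%nat t * F 4%nat t + K 2%nat t * F 3%nat t
  - K 3%nat t * F 2%nat t + K 4%nat t * F 1%nat t - K 5%nat t * F 0%nat t.

Lemma deriv_chain_on_sub a b a' b' F :
  deriv_chain_on a b F -> a <= a' -> b' <= b -> deriv_chain_on a' b' F.
Proof.
  intros [HF HF6] Ha Hb. split.
  - intros k x Hk Hx. apply HF; [exact Hk | lra].
  - intros x Hx. apply HF6. lra.
Qed.

Lemma deriv_chain_continuous a b F k x :
  deriv_chain_on a b F -> (k <= 6)%nat -> a <= x <= b -> continuous (F k) x.
Proof.
  intros [HF HF6] Hk Hx. destruct (Nat.eq_dec k 6) as [-> | Hk6]; [now apply HF6|].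
  apply (@ex_derive_continuous R_AbsRing R_NormedModule). eexists. apply HF; [lia | exact Hx].
Qed.

Lemma is_RInt_parts_sum K F a b :
  kernel_chain K -> deriv_chain_on a b F -> a <= b ->
  is_RInt (fun t => K 0%nat t * F 6%nat t + F 0%nat t) a b
    (parts_sum K F b - parts_sum K F a).
Proof.
  intros [HK HK5] HF Hab.
  apply (is_RInt_derive (parts_sum K F)); rewrite Rmin_left, Rmax_right by lra;
    intros x Hx.
  - assert (HFx : forall k, (k < 6)%nat -> is_derive (F k) x (F (S k) x))
      by (intros k Hk; now apply HF).
    unfold parts_sum. eapply (eq_ind _ (is_derive _ x)).
    (* [idtac;] delays the [match] until a leaf goal is reached. *)
    + derive_by_rules ltac:(idtac; match goal with
        | |- is_derive (fun t => K 5%nat t) _ _ => exact (HK5 x)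
        | |- is_derive (fun t => K _ t) _ _ => apply HK; lia
        | |- is_derive (fun t => F _ t) _ _ => apply HFx; lia
        end).
    + unfold minus, plus, opp, mult; simpl. ring.
  - apply (@continuous_plus R_UniformSpace R_AbsRing R_NormedModule
             (fun t => K 0%nat t * F 6%nat t) (F 0%nat)).
    + apply (@continuous_mult R_UniformSpace R_AbsRing (K 0%nat) (F 6%nat)).
      * apply (@ex_derive_continuous R_AbsRing R_NormedModule). eexists. apply HK; lia.
      * apply (deriv_chain_continuous a b); [exact HF | lia | exact Hx].
    + apply (deriv_chain_continuous a b); [exact HF | lia | exact Hx].
Qed.

Lemma ex_RInt_deriv_chain a b F : deriv_chain_on a b F -> a <= b -> ex_RInt (F 0%nat) a b.
Proof.
  intros HF Hab. apply (@ex_RInt_continuous R_CompleteNormedModule).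
  rewrite Rmin_left, Rmax_right by lra. intros x Hx.
  apply (deriv_chain_continuous a b); [exact HF | lia | exact Hx].
Qed.

Lemma is_RInt_weighted_abs_le (k d : R -> R) a b A B M :
  a <= b -> is_RInt (fun t => k t * d t) a b A -> is_RInt k a b B ->
  (forall t, a < t < b -> 0 <= k t) -> (forall t, a < t < b -> Rabs (d t) <= M) ->
  Rabs A <= M * B.
Proof.
  intros Hab HA HB Hk Hd.
  assert (HMB : forall c, is_RInt (fun t => c * k t) a b (c * B))
    by (intros c; exact (is_RInt_scal k a b c B HB)).
  assert (Hbox : forall t, a < t < b -> - M * k t <= k t * d t <= M * k t).
  { intros t Ht. specialize (Hk t Ht). specialize (Hd t Ht).
    apply Rabs_le_between in Hd. split; nra. }
  apply Rabs_le. split.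
  - replace (- (M * B)) with (- M * B) by ring.
    apply (is_RInt_le _ _ a b _ _ Hab (HMB (- M)) HA). intros t Ht. apply Hbox, Ht.
  - apply (is_RInt_le _ _ a b _ _ Hab HA (HMB M)). intros t Ht. apply Hbox, Ht.
Qed.

Definition mono (n : nat) (x : R) : R := x ^ n / INR (fact n).

Ltac eval_mono := unfold mono; rewrite ?INR_IZR_INZ; simpl fact; simpl Z.of_nat.

Lemma mono_0 x : mono 0 x = 1.
Proof. unfold mono. simpl. field. Qed.

Lemma is_derive_mono n x : is_derive (mono (S n)) x (mono n x).
Proof.
  unfold mono. auto_derive; [easy|].
  change (fact n + n * fact n)%nat with (fact (S n)).
  change (match n with 0%nat => 1 | S _ => INR n + 1 end) with (INR (S n)).
  rewrite fact_simpl, mult_INR. field.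
  split; [apply INR_fact_neq_0 | apply not_0_INR; lia].
Qed.

Lemma is_derive_mono_affine n s e t :
  is_derive (fun t => mono (S n) (s * (t - e))) t (s * mono n (s * (t - e))).
Proof.
  apply (is_derive_comp (mono (S n)) (fun t => s * (t - e))); [apply is_derive_mono|].
  auto_derive; [easy | ring].
Qed.

Lemma is_RInt_mono n a b : is_RInt (mono n) a b (mono (S n) b - mono (S n) a).
Proof.
  apply (is_RInt_derive (mono (S n))); intros x _; [apply is_derive_mono|].
  apply (@ex_derive_continuous R_AbsRing R_NormedModule). unfold mono. auto_derive. easy.
Qed.

Definition mono6 (k : nat) : R -> R := mono (6 - k).

Lemma deriv_chain_mono6 a b : deriv_chain_on a b mono6.
Proof.
  split.
  - intros k x Hk _. unfold mono6.
    replace (6 - k)%nat with (S (6 - S k)) by lia. apply is_derive_mono.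
  - intros x _. apply (continuous_ext (fun _ => 1)); [intros; symmetry; apply mono_0|].
    apply continuous_const.
Qed.

Definition piece_error (K F : nat -> R -> R) (a b : R) : R :=
  parts_sum K F b - parts_sum K F a - RInt (F 0%nat) a b.

Lemma is_RInt_piece_error K F a b :
  kernel_chain K -> deriv_chain_on a b F -> a <= b ->
  is_RInt (fun t => K 0%nat t * F 6%nat t) a b (piece_error K F a b).
Proof.
  intros HK HF Hab.
  assert (Hparts := is_RInt_parts_sum K F a b HK HF Hab).
  assert (HF0 := RInt_correct _ _ _ (ex_RInt_deriv_chain a b F HF Hab)).
  apply (is_RInt_ext (fun t => minus (K 0%nat t * F 6%nat t + F 0%nat t) (F 0%nat t))).
  { intros t _. unfold minus, plus, opp; simpl. ring. }
  exact (is_RInt_minus _ _ a b _ _ Hparts HF0).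
Qed.

Lemma piece_error_bound K F a b M :
  kernel_chain K -> deriv_chain_on a b F -> a <= b ->
  (forall t, a < t < b -> 0 <= K 0%nat t) ->
  (forall t, a < t < b -> Rabs (F 6%nat t) <= M) ->
  Rabs (piece_error K F a b) <= M * piece_error K mono6 a b.
Proof.
  intros HK HF Hab Hpos HM.
  apply (is_RInt_weighted_abs_le (K 0%nat) (F 6%nat) a b); try assumption.
  - now apply is_RInt_piece_error.
  - apply (is_RInt_ext (fun t => K 0%nat t * mono6 6 t)).
    { intros t _. unfold mono6. simpl. rewrite mono_0. ring. }
    apply is_RInt_piece_error; [exact HK | apply deriv_chain_mono6 | exact Hab].
Qed.

Definition gauss_node : R := sqrt 3 / 3.

Lemma gauss_node_sqr : gauss_node * gauss_node = 1 / 3.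
Proof.
  unfold gauss_node. replace (sqrt 3 / 3 * (sqrt 3 / 3)) with (sqrt 3 * sqrt 3 / 9) by field.
  rewrite sqrt_sqrt by lra. field.
Qed.

Lemma gauss_node_bounds : 4 / 7 <= gauss_node <= 1.
Proof.
  assert (Hpos : 0 < gauss_node) by (apply Rdiv_lt_0_compat; [apply sqrt_lt_R0 |]; lra).
  pose proof gauss_node_sqr. split; nra.
Qed.

(* On [-1,0] the Peano kernel of T - I is
     t |-> sum of w_i (t - x_i)^5/5! over the nodes x_i <= t  -  (t + 1)^6/6!,
   the nodes being -1 (weight 2/15) and -c (weight 3/5); on [0,1] it is the mirror
   image.  [peano_kernel s e n w j] is the j-th derivative of one polynomial piece:
   orientation s = 1 or -1, endpoint e, interior node n with weight w. *)
Definition peano_kernel (s e n w : R) (j : nat) (t : R) : R :=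
  s ^ j * (2/15 * mono (5 - j) (s * (t - e)) + w * mono (5 - j) (s * (t - n))
           - mono (6 - j) (s * (t - e))).

Lemma kernel_chain_peano s e n w : s * s = 1 -> kernel_chain (peano_kernel s e n w).
Proof.
  intros Hs. split.
  - intros j t Hj. unfold peano_kernel.
    change (5 - S j)%nat with (4 - j)%nat. change (6 - S j)%nat with (5 - j)%nat.
    replace (6 - j)%nat with (S (5 - j)) by lia.
    replace (5 - j)%nat with (S (4 - j)) by lia.
    set (m := (4 - j)%nat). (* keeps [simpl] below from unfolding [4 - j] *)
    eapply (eq_ind _ (is_derive _ t)).
    + derive_by_rules ltac:(apply is_derive_mono_affine).
    + unfold minus, plus, opp, mult, zero; simpl. ring.
  - intros t. unfold peano_kernel. simpl Nat.sub.
    apply (is_derive_ext (fun t => s ^ 5 * (2/15 + w - s * (t - e)))).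
    { intros u. simpl. eval_mono. field. }
    auto_derive; [easy|].
    transitivity (- ((s * s) * (s * s) * (s * s))); [ring | rewrite Hs; ring].
Qed.

Lemma peano_kernel_reflect e n w t :
  peano_kernel (-1) e n w 0 t = peano_kernel 1 (- e) (- n) w 0 (- t).
Proof.
  unfold peano_kernel.
  replace (-1 * (t - e)) with (1 * (- t - - e)) by ring.
  replace (-1 * (t - n)) with (1 * (- t - - n)) by ring.
  ring.
Qed.

Lemma mono_nonneg n X : 0 <= X -> 0 <= mono n X.
Proof.
  intros HX. apply Rdiv_le_0_compat; [now apply pow_le | apply lt_0_INR, lt_O_fact].
Qed.

Lemma mono56_nonneg X : 0 <= X <= 4/5 -> 0 <= 2/15 * mono 5 X - mono 6 X.
Proof.
  intros HX. assert (HX5 : 0 <= X ^ 5) by (apply pow_le; lra).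
  eval_mono. replace (X ^ 6) with (X ^ 5 * X) by ring. nra.
Qed.

Lemma mono56_deficit_le t :
  -1/5 <= t <= 0 -> mono 6 (1 + t) - 2/15 * mono 5 (1 + t) <= 3/5 * mono 5 (t + 4/7).
Proof.
  intros Ht. eval_mono. nra.
Qed.

Lemma peano_kernel_outer_nonneg t : -1 <= t <= - gauss_node -> 0 <= peano_kernel 1 (-1) 0 0 0 t.
Proof.
  intros Ht. pose proof gauss_node_bounds.
  pose proof (mono56_nonneg (1 * (t - -1)) ltac:(lra)).
  unfold peano_kernel. rewrite pow_O. simpl Nat.sub. lra.
Qed.

Lemma peano_kernel_inner_nonneg t :
  - gauss_node <= t <= 0 -> 0 <= peano_kernel 1 (-1) (- gauss_node) (3/5) 0 t.
Proof.
  intros Ht. pose proof gauss_node_bounds.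
  unfold peano_kernel. rewrite pow_O. simpl Nat.sub.
  replace (1 * (t - -1)) with (1 + t) by ring.
  replace (1 * (t - - gauss_node)) with (t + gauss_node) by ring.
  destruct (Rle_dec t (-1/5)) as [Hleft | Hright].
  - pose proof (mono56_nonneg (1 + t) ltac:(lra)).
    pose proof (mono_nonneg 5 (t + gauss_node) ltac:(lra)). lra.
  - pose proof (mono56_deficit_le t ltac:(lra)).
    assert (mono 5 (t + 4/7) <= mono 5 (t + gauss_node)).
    { eval_mono. apply Rmult_le_compat_r; [lra | apply pow_incr; lra]. }
    lra.
Qed.

Definition total_error (F : nat -> R -> R) : R :=
  piece_error (peano_kernel 1 (-1) 0 0) F (-1) (- gauss_node)
  + piece_error (peano_kernel 1 (-1) (- gauss_node) (3/5)) F (- gauss_node) 0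
  + piece_error (peano_kernel (-1) 1 gauss_node (3/5)) F 0 gauss_node
  + piece_error (peano_kernel (-1) 1 0 0) F gauss_node 1.

Lemma total_error_eq (F : nat -> R -> R) :
  deriv_chain_on (-1) 1 F -> total_error F = Tq (F 0%nat) - Iq (F 0%nat).
Proof.
  intros HF. unfold total_error, Tq. fold gauss_node.
  pose proof gauss_node_bounds as Hnode. pose proof gauss_node_sqr as Hsq.
  set (c := gauss_node) in *. clearbody c.
  assert (Hsub : forall a b, -1 <= a -> a <= b -> b <= 1 -> ex_RInt (F 0%nat) a b)
    by (intros a b Ha Hab Hb; apply ex_RInt_deriv_chain; [eapply deriv_chain_on_sub |]; eauto).
  assert (Hsplit : Iq (F 0%nat) = RInt (F 0%nat) (-1) (- c) + RInt (F 0%nat) (- c) 0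
                                  + RInt (F 0%nat) 0 c + RInt (F 0%nat) c 1).
  { unfold Iq.
    rewrite <- (RInt_Chasles (F 0%nat) (-1) c 1), <- (RInt_Chasles (F 0%nat) (-1) 0 c),
      <- (RInt_Chasles (F 0%nat) (-1) (- c) 0) by (apply Hsub; lra).
    reflexivity. }
  rewrite Hsplit. unfold piece_error, parts_sum, peano_kernel. simpl Nat.sub. eval_mono.
  assert (c2 : c ^ 2 = 1 / 3) by (rewrite <- Hsq; ring).
  assert (c3 : c ^ 3 = c / 3) by (replace (c ^ 3) with (c ^ 2 * c) by ring; rewrite c2; field).
  assert (c4 : c ^ 4 = 1 / 9) by (replace (c ^ 4) with (c ^ 2 * c ^ 2) by ring; rewrite c2; field).
  assert (c5 : c ^ 5 = c / 9) by (replace (c ^ 5) with (c ^ 4 * c) by ring; rewrite c4; field).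
  assert (c6 : c ^ 6 = 1 / 27)
    by (replace (c ^ 6) with (c ^ 4 * c ^ 2) by ring; rewrite c4, c2; field).
  field_simplify. rewrite ?c6, ?c5, ?c4, ?c3, ?c2. field.
Qed.

Lemma total_error_mono6 : total_error mono6 = / 28350.
Proof.
  rewrite (total_error_eq mono6 (deriv_chain_mono6 (-1) 1)).
  unfold Iq, Tq, mono6. simpl Nat.sub.
  rewrite (is_RInt_unique _ _ _ _ (is_RInt_mono 6 (-1) 1)). fold gauss_node.
  pose proof gauss_node_sqr as Hsq. eval_mono.
  replace ((- gauss_node) ^ 6) with ((gauss_node * gauss_node) ^ 3) by ring.
  replace (gauss_node ^ 6) with ((gauss_node * gauss_node) ^ 3) by ring.
  rewrite Hsq. field.
Qed.

Lemma total_error_bound F M :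
  deriv_chain_on (-1) 1 F -> (forall t, I11 t -> Rabs (F 6%nat t) <= M) ->
  Rabs (total_error F) <= M * total_error mono6.
Proof.
  intros HF HM. pose proof gauss_node_bounds as Hnode.
  assert (Hpiece : forall s e n w a b, s * s = 1 -> -1 <= a -> a <= b -> b <= 1 ->
            (forall t, a < t < b -> 0 <= peano_kernel s e n w 0 t) ->
            Rabs (piece_error (peano_kernel s e n w) F a b)
              <= M * piece_error (peano_kernel s e n w) mono6 a b).
  { intros s e n w a b Hs Ha Hab Hb Hpos.
    apply piece_error_bound; try assumption.
    - now apply kernel_chain_peano.
    - now apply (deriv_chain_on_sub (-1) 1).
    - intros t Ht. apply HM. unfold I11. lra. }
  assert (H1 : Rabs (piece_error (peano_kernel 1 (-1) 0 0) F (-1) (- gauss_node))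
                 <= M * piece_error (peano_kernel 1 (-1) 0 0) mono6 (-1) (- gauss_node)).
  { apply Hpiece; try lra. intros t Ht. apply peano_kernel_outer_nonneg. lra. }
  assert (H2 : Rabs (piece_error (peano_kernel 1 (-1) (- gauss_node) (3/5)) F (- gauss_node) 0)
                 <= M * piece_error (peano_kernel 1 (-1) (- gauss_node) (3/5)) mono6 (- gauss_node) 0).
  { apply Hpiece; try lra. intros t Ht. apply peano_kernel_inner_nonneg. lra. }
  assert (H3 : Rabs (piece_error (peano_kernel (-1) 1 gauss_node (3/5)) F 0 gauss_node)
                 <= M * piece_error (peano_kernel (-1) 1 gauss_node (3/5)) mono6 0 gauss_node).
  { apply (Hpiece (-1) 1 gauss_node (3/5)); try lra. intros t Ht.
    rewrite peano_kernel_reflect. replace (- 1) with (-1) by ring.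
    apply peano_kernel_inner_nonneg. lra. }
  assert (H4 : Rabs (piece_error (peano_kernel (-1) 1 0 0) F gauss_node 1)
                 <= M * piece_error (peano_kernel (-1) 1 0 0) mono6 gauss_node 1).
  { apply (Hpiece (-1) 1 0 0); try lra. intros t Ht.
    rewrite peano_kernel_reflect, Ropp_0. replace (- 1) with (-1) by ring.
    apply peano_kernel_outer_nonneg. lra. }
  unfold total_error. rewrite !Rmult_plus_distr_l.
  eapply Rle_trans; [apply Rabs_triang | apply Rplus_le_compat; [| exact H4]].
  eapply Rle_trans; [apply Rabs_triang | apply Rplus_le_compat; [| exact H3]].
  eapply Rle_trans; [apply Rabs_triang | apply Rplus_le_compat; [exact H1 | exact H2]].
Qed.

Lemma C6_extension f D :
  C6_on_I11 f D ->
  exists F, deriv_chain_on (-1) 1 F /\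
    forall x, I11 x -> F 0%nat x = f x /\ F 6%nat x = D 6%nat x.
Proof.
  intros [H0 [HD HC]].
  assert (HDc : forall k, (k <= 6)%nat -> continuous_on_I11 (D k)).
  { intros k Hk. destruct (Nat.eq_dec k 6) as [-> | Hk6]; [exact HC |].
    apply (continuous_on_I11_of_deriv _ (D (S k))), HD. lia. }
  (* D 7 is not controlled, so the top derivative is extended by clamping instead. *)
  set (F k := if (k <? 6)%nat then extend (D k) (D (S k)) else fun y => D k (clamp y)).
  assert (HFD : forall k x, I11 x -> F k x = D k x).
  { intros k x Hx. unfold F.
    destruct (k <? 6)%nat; [now apply extend_I11 | now rewrite clamp_id]. }
  exists F. split; [split |].
  - intros k x Hk Hx. assert (HxI : I11 x) by (unfold I11; lra).
    rewrite (HFD (S k) x HxI). unfold F. rewrite (proj2 (Nat.ltb_lt k 6) Hk).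
    apply is_derive_extend; [now apply HD | apply HDc; lia | exact HxI].
  - intros x Hx. apply continuous_comp_clamp; [exact HC | unfold I11; lra].
  - intros x Hx. rewrite !HFD by exact Hx. split; [now apply H0 | reflexivity].
Qed.

Theorem proposition5 (f : R -> R) (D : nat -> R -> R) (M : R) :
  C6_on_I11 f D ->
  is_lub (fun y => exists x, I11 x /\ y = Rabs (D 6%nat x)) M ->
  Rabs (Tq f - Iq f) <= M / 28350.
Proof.
  intros Hf [Hub _].
  destruct (C6_extension f D Hf) as [F [HF HFD]].
  assert (HM : forall t, I11 t -> Rabs (F 6%nat t) <= M).
  { intros t Ht. apply Hub. exists t. split; [exact Ht |]. now rewrite (proj2 (HFD t Ht)). }
  assert (HT : Tq f = Tq (F 0%nat)).
  { pose proof gauss_node_bounds. unfold Tq. fold gauss_node.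
    rewrite !(fun x Hx => proj1 (HFD x Hx)); try reflexivity; unfold I11; lra. }
  assert (HI : Iq f = Iq (F 0%nat)).
  { unfold Iq. apply RInt_ext. rewrite Rmin_left, Rmax_right by lra.
    intros x Hx. symmetry. apply HFD. unfold I11; lra. }
  rewrite HT, HI, <- (total_error_eq F HF).
  replace (M / 28350) with (M * total_error mono6) by (rewrite total_error_mono6; field).
  now apply total_error_bound.
Qed.
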